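(* Let $G\in\mathcal{G}(\widehat{C}_6,\widehat{C}_7)$, let $x\in V(G)$, let $A$ be a connected component of $G[N_2(x)]$ not belonging to $A^*$, and let $a\in V(A)$ have a neighbour in $A$. Suppose $N(a)\cap D=\{v_1,\dots,v_k\}$ with $k>2$. Then $N(\{v_1,\dots,v_k\})\cap N_2(x)=\{a\}$.
   Context: All graphs are finite, simple and undirected. $\mathcal{G}(\widehat{C}_6,\widehat{C}_7)$ is the family of graphs with no subgraph (not necessarily induced) isomorphic to $C_6$ or $C_7$. For a vertex set $S$, $N_i(S)$ is the set of vertices at distance exactly $i$ from $S$, $N(S)=N_1(S)$, $N[S]=S\cup N(S)$, $N(v)=N(\{v\})$, $N_2(v)=N_2(\{v\})$ (all in $G$). $A^*$ is the set of connected components $A$ of $G[N_2(x)]$ for which there exists a vertex $a\in V(A)$ with $N(x)\cap N(a)=N(x)\cap N(V(A))$; $V(A^* )$ is the union of their vertex sets; and $D=N(x)\setminus N(V(A^* ))$ (the vertices of $N(x)$ having no neighbour in a component of $A^*$). *)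

From mathcomp Require Import all_boot.
Set Implicit Arguments. Unset Strict Implicit. Unset Printing Implicit Defensive.

Section G.
Variables (T : finType) (e : rel T).

Definition simple_graph := symmetric e /\ irreflexive e.

(* G contains a (not necessarily induced) cycle of length n *)
Definition has_cycle_of_length (n : nat) :=
  exists s : seq T, [/\ size s = n, uniq s & cycle e s].

Definition C6C7_free := ~ has_cycle_of_length 6 /\ ~ has_cycle_of_length 7.

Definition Nv (v : T) : {set T} := [set u | e v u].
Definition NS (S : {set T}) : {set T} :=
  [set u | (u \notin S) && [exists s in S, e s u]].
Definition N2 (v : T) : {set T} :=
  [set u | [&& u != v, ~~ e v u & [exists w, e v w && e w u]]].

Definition eN2 (x : T) : rel T :=
  fun u w => [&& e u w, u \in N2 x & w \in N2 x].

Definition compN2 (x a0 : T) : {set T} := [set y | connect (eN2 x) a0 y].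

Definition comps (x : T) : {set {set T}} :=
  [set A | [exists a0 in N2 x, A == compN2 x a0]].

Definition Astar (x : T) : {set {set T}} :=
  [set A in comps x | [exists a in A, Nv x :&: Nv a == Nv x :&: NS A]].

Definition VAstar (x : T) : {set T} := \bigcup_(A in Astar x) A.

Definition Dset (x : T) : {set T} := Nv x :\: NS (VAstar x).

End G.

From mathcomp Require Import all_boot.

(* A component B of G[N_2(x)] lies in A^* as soon as every N(x)-neighbour of B
   sees one fixed vertex b of B, and such a property spreads along the edges of
   B whenever the only way to break it would close a C_6 or a C_7 through x.
   Since a has two neighbours in N(x), this spreading from a shows that, as A is
   not in A^*, some w in N(x) misses a but sees a neighbour c of a in N_2(x).
   Now let v_1 in N(a) cap D see some u <> a in N_2(x).  The pair (c, w) and a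
   second vertex of N(a) cap N(x) forbid (by a C_6) a common neighbour of v_1
   and a in N_2(x); a third one lets "q <> a and all N(x)-neighbours of q see u"
   spread from u over its whole component, which therefore lies in A^*; but then
   v_1 has a neighbour in V(A^* ), contradicting v_1 in D. *)

Set Implicit Arguments.
Unset Strict Implicit.
Unset Printing Implicit Defensive.

Lemma connect_forward (T : finType) (R : rel T) (P : pred T) s z :
  (forall q q', R q q' -> P q -> P q') -> connect R s z -> P s -> P z.
Proof.
move=> step /connectP [p]; elim: p s => [|q p IHp] s /=; first by move=> _ ->.
by case/andP=> Rsq Rp z_last Ps; apply: IHp Rp z_last (step _ _ Rsq Ps).
Qed.

Lemma card_gt1_other (T : finType) (S : {set T}) w :
  1 < #|S| -> exists2 v, v \in S & v != w.
Proof.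
case/card_gt1P=> [u [v [uS vS uv]]].
by case: (eqVneq u w) => [uw|]; [exists v; rewrite // -uw eq_sym | exists u].
Qed.

Lemma in_Nv (T : finType) (e : rel T) v u : (u \in Nv e v) = e v u.
Proof. by rewrite inE. Qed.

Section Graph.

Variables (T : finType) (e : rel T).
Hypotheses (e_sym : symmetric e) (e_irr : irreflexive e).
Variable x : T.

Lemma adj_neq u v : e u v -> u != v.
Proof. by apply: contraTneq => ->; rewrite e_irr. Qed.

Lemma nonadj_neq w u v : e w u -> ~~ e w v -> u != v.
Proof. by move=> wu; apply: contraNneq => <-. Qed.

Lemma N2_neq p : p \in N2 e x -> p != x.
Proof. by rewrite inE => /and3P []. Qed.

Lemma N2_nadj p : p \in N2 e x -> ~~ e x p.
Proof. by rewrite inE => /and3P []. Qed.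

Lemma N2_link p : p \in N2 e x -> exists2 w, e x w & e w p.
Proof. by rewrite inE => /and3P [_ _ /existsP [w /andP [xw wp]]]; exists w. Qed.

Lemma eN2_sym : symmetric (eN2 e x).
Proof. by move=> p q; rewrite /eN2 e_sym (andbC (p \in _)). Qed.

Lemma compN2_sub b : b \in N2 e x -> compN2 e x b \subset N2 e x.
Proof.
move=> bN2; apply/subsetP => z; rewrite inE => /(@connect_forward _ _ (mem (N2 e x))).
by apply=> // q q' /and3P [].
Qed.

Lemma compN2_comps b : b \in N2 e x -> compN2 e x b \in comps e x.
Proof. by move=> bN2; rewrite inE; apply/existsP; exists b; rewrite bN2 eqxx. Qed.

Lemma comps_sub A : A \in comps e x -> A \subset N2 e x.
Proof. by rewrite inE => /existsP [b /andP [bN2 /eqP ->]]; exact: compN2_sub. Qed.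

Lemma comps_compN2 A a : A \in comps e x -> a \in A -> A = compN2 e x a.
Proof.
rewrite inE => /existsP [b /andP [_ /eqP ->]]; rewrite inE => ba.
by apply/setP => y; rewrite !inE (same_connect (sym_connect_sym eN2_sym) ba).
Qed.

Lemma VAstar_sub : VAstar e x \subset N2 e x.
Proof. by apply/bigcupsP => B; rewrite inE => /andP [/comps_sub]. Qed.

Lemma compN2_Astar b :
    b \in N2 e x -> {in compN2 e x b, forall s, Nv e x :&: Nv e s \subset Nv e b} ->
  compN2 e x b \in Astar e x.
Proof.
move=> bN2 sees_b; rewrite inE compN2_comps //=; apply/existsP; exists b.
rewrite inE connect0 /=; apply/eqP/setP => y; rewrite !in_setI.
apply: andb_id2l; rewrite inE => xy.
have yB : y \notin compN2 e x b.
  by apply: contraTN xy => /(subsetP (compN2_sub bN2))/N2_nadj.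
rewrite [y \in NS _ _]inE yB inE; apply/idP/existsP => [b_y|[s /andP [bs sy]]].
  by exists b; rewrite inE connect0.
by have /subsetP/(_ y) := sees_b s bs; rewrite !inE xy sy; apply.
Qed.

Lemma NS_VAstar v u :
  e x v -> e v u -> u \in N2 e x -> compN2 e x u \in Astar e x ->
  v \in NS e (VAstar e x).
Proof.
move=> xv vu uN2 uAstar; rewrite inE; apply/andP; split.
  by apply: contraTN xv => /(subsetP VAstar_sub)/N2_nadj.
apply/existsP; exists u; rewrite e_sym vu andbT.
by apply/bigcupP; exists (compN2 e x u); rewrite // inE connect0.
Qed.

Section CycleFree.

Hypotheses (no_C6 : ~ has_cycle_of_length e 6) (no_C7 : ~ has_cycle_of_length e 7).

Lemma no_layered_cycle (ys ps s : seq T) :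
    size s \in [:: 6; 7] -> s =i x :: ys ++ ps -> size s = size (x :: ys ++ ps) ->
    {in ys, forall y, e x y} -> {subset ps <= N2 e x} -> uniq ys -> uniq ps ->
  ~ cycle e s.
Proof.
move=> size_s s_eq size_eq xys psN2 uys ups cyc.
have us : uniq s.
  rewrite (eq_uniq size_eq s_eq) /= cat_uniq uys ups andbT mem_cat negb_or -andbA.
  apply/and3P; split.
  - by apply/negP => /xys; rewrite e_irr.
  - by apply/negP => /psN2/N2_neq; rewrite eqxx.
  - by apply/hasPn => p /psN2/N2_nadj; apply: contra; apply: xys.
by move: size_s; rewrite !inE => /orP [] /eqP size_s; [apply: no_C6 | apply: no_C7];
  exists s.
Qed.

(* The digits list the distances from x of the vertices of the cycle, starting at x. *)
Lemma no_cycle_0122121 y1 p1 p2 y2 p3 y3 :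
    e x y1 -> e x y2 -> e x y3 -> p1 \in N2 e x -> p2 \in N2 e x -> p3 \in N2 e x ->
    y1 != y2 -> y1 != y3 -> y2 != y3 -> p1 != p3 -> p2 != p3 ->
  e y1 p1 -> e p1 p2 -> e p2 y2 -> e y2 p3 -> e p3 y3 -> False.
Proof.
move=> xy1 xy2 xy3 p1N2 p2N2 p3N2 y12 y13 y23 p13 p23 y1p1 p1p2 p2y2 y2p3 p3y3.
apply: (@no_layered_cycle [:: y1; y2; y3] [:: p1; p2; p3]
                          [:: x; y1; p1; p2; y2; p3; y3]) => //.
- by move=> z; rewrite !inE; do !case: eqP.
- by move=> y; rewrite !in_cons in_nil orbF => /or3P [] /eqP ->.
- by move=> p; rewrite !in_cons in_nil orbF => /or3P [] /eqP ->.
- by rewrite /= !inE negb_or y12 y13 y23.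
- by rewrite /= !inE negb_or p13 p23 adj_neq.
- by rewrite /= xy1 y1p1 p1p2 p2y2 y2p3 p3y3 e_sym xy3.
Qed.

Lemma no_cycle_012121 y1 p1 y2 p2 y3 :
    e x y1 -> e x y2 -> e x y3 -> p1 \in N2 e x -> p2 \in N2 e x ->
    y1 != y2 -> y1 != y3 -> y2 != y3 -> p1 != p2 ->
  e y1 p1 -> e p1 y2 -> e y2 p2 -> e p2 y3 -> False.
Proof.
move=> xy1 xy2 xy3 p1N2 p2N2 y12 y13 y23 p12 y1p1 p1y2 y2p2 p2y3.
apply: (@no_layered_cycle [:: y1; y2; y3] [:: p1; p2]
                          [:: x; y1; p1; y2; p2; y3]) => //.
- by move=> z; rewrite !inE; do !case: eqP.
- by move=> y; rewrite !in_cons in_nil orbF => /or3P [] /eqP ->.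
- by move=> p; rewrite !in_cons in_nil orbF => /orP [] /eqP ->.
- by rewrite /= !inE negb_or y12 y13 y23.
- by rewrite /= !inE p12.
- by rewrite /= xy1 y1p1 p1y2 y2p2 p2y3 e_sym xy3.
Qed.

Lemma no_cycle_012221 y1 p1 p2 p3 y2 :
    e x y1 -> e x y2 -> p1 \in N2 e x -> p2 \in N2 e x -> p3 \in N2 e x ->
    y1 != y2 -> p1 != p3 ->
  e y1 p1 -> e p1 p2 -> e p2 p3 -> e p3 y2 -> False.
Proof.
move=> xy1 xy2 p1N2 p2N2 p3N2 y12 p13 y1p1 p1p2 p2p3 p3y2.
apply: (@no_layered_cycle [:: y1; y2] [:: p1; p2; p3]
                          [:: x; y1; p1; p2; p3; y2]) => //.
- by move=> z; rewrite !inE; do !case: eqP.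
- by move=> y; rewrite !in_cons in_nil orbF => /orP [] /eqP ->.
- by move=> p; rewrite !in_cons in_nil orbF => /or3P [] /eqP ->.
- by rewrite /= !inE y12.
- by rewrite /= !inE negb_or p13 !adj_neq.
- by rewrite /= xy1 y1p1 p1p2 p2p3 p3y2 e_sym xy2.
Qed.

Lemma compN2_Astar_of_closed a :
    a \in N2 e x -> 1 < #|Nv e x :&: Nv e a| ->
    (forall c w, c \in N2 e x -> e a c -> e x w -> e w c -> e w a) ->
  compN2 e x a \in Astar e x.
Proof.
move=> aN2 two_nbrs closed_a; apply: compN2_Astar => // s.
rewrite inE => /(@connect_forward _ _ (fun q => Nv e x :&: Nv e q \subset Nv e a)).
apply=> [q q' /and3P [qq' qN2 q'N2] /subsetP sees_a|]; last exact: subsetIr.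
apply/subsetP => y; rewrite !inE => /andP [xy q'y].
have [qa | q_a] := eqVneq q a.
  by rewrite qa in qq'; rewrite e_sym (closed_a q') // e_sym.
have [w0 xw0 w0q] := N2_link qN2.
have aw0 : e a w0 by have := sees_a w0; rewrite !inE xw0 e_sym w0q; apply.
have [v] := card_gt1_other w0 two_nbrs; rewrite !inE => /andP [xv av] vw0.
apply: contraT => nay; exfalso.
apply: (no_cycle_0122121 xy xw0 xv q'N2 qN2 aN2) => //; try by rewrite e_sym.
- by rewrite eq_sym (nonadj_neq aw0).
- by rewrite eq_sym (nonadj_neq av).
- by rewrite eq_sym.
- by apply: (nonadj_neq (w := y)); rewrite // e_sym.
Qed.

Lemma link_of_notin_Astar A a :
    A \in comps e x -> A \notin Astar e x -> a \in A -> 1 < #|Nv e x :&: Nv e a| ->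
  exists c w, [/\ c \in N2 e x, e a c, e x w, e w c & ~~ e a w].
Proof.
move=> A_comp A_Astar aA two_nbrs.
have /existsP [c /existsP [w /and5P link]] :
    [exists c, exists w, [&& c \in N2 e x, e a c, e x w, e w c & ~~ e a w]].
  apply: contraNT A_Astar => /existsPn no_link.
  rewrite (comps_compN2 A_comp aA).
  apply: compN2_Astar_of_closed (subsetP (comps_sub A_comp) a aA) two_nbrs _.
  move=> c w cN2 ac xw wc; rewrite e_sym; apply: contraT => naw.
  by have /existsPn /(_ w) := no_link c; rewrite cN2 ac xw wc naw.
by exists c, w.
Qed.

Section Link.

Variables a c w v1 : T.
Hypotheses (aN2 : a \in N2 e x) (cN2 : c \in N2 e x) (ac : e a c).
Hypotheses (xw : e x w) (wc : e w c) (naw : ~~ e a w).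
Hypotheses (xv1 : e x v1) (av1 : e a v1) (three_nbrs : 2 < #|Nv e x :&: Nv e a|).

Lemma other_nbr y : exists vj, [/\ e x vj, e a vj, vj != v1 & vj != y].
Proof.
have v1S : v1 \in Nv e x :&: Nv e a by rewrite !inE xv1 av1.
move: three_nbrs; rewrite (cardsD1 v1) v1S => /(card_gt1_other y) [vj].
by rewrite !inE => /and3P [vj1 xvj avj] vjy; exists vj.
Qed.

Lemma no_common_N2_nbr z : z \in N2 e x -> e z v1 -> e z a -> False.
Proof.
move=> zN2 zv1 za; have [v2 [xv2 av2 v21 _]] := other_nbr v1.
have v1w : v1 != w := nonadj_neq av1 naw.
have [zc | z_c] := eqVneq z c.
  rewrite zc in zv1.
  apply: (no_cycle_012121 xw xv1 xv2 cN2 aN2) => //; try by rewrite e_sym.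
  - by rewrite eq_sym.
  - by rewrite eq_sym (nonadj_neq av2).
  - by rewrite eq_sym.
  - by rewrite eq_sym adj_neq.
by apply: (no_cycle_012221 xv1 xw zN2 aN2 cN2); rewrite // e_sym.
Qed.

Variable u : T.
Hypotheses (uN2 : u \in N2 e x) (u_a : u != a) (v1u : e v1 u).

Lemma step_avoids_a q q' :
    eN2 e x q q' -> q != a -> Nv e x :&: Nv e q \subset Nv e u -> q' != a.
Proof.
move=> /and3P [qq' qN2 _] q_a /subsetP sees_u.
apply: contraTneq qq' => ->; apply/negP => qa.
have [v1q | nv1q] := boolP (e v1 q); first by apply: (no_common_N2_nbr qN2); rewrite // e_sym.
have [w0 xw0 w0q] := N2_link qN2.
have uw0 : e u w0 by have := sees_u w0; rewrite !inE xw0 e_sym w0q; apply.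
have [vj [xvj avj vj1 vjw0]] := other_nbr w0.
apply: (no_cycle_0122121 xvj xw0 xv1 aN2 qN2 uN2) => //; try by rewrite e_sym.
- by apply: (nonadj_neq (w := q)); rewrite e_sym.
- by rewrite eq_sym.
- by rewrite eq_sym (nonadj_neq v1u).
Qed.

Lemma step_preserves_nbr_sub q q' :
    eN2 e x q q' -> q != a -> q' != a ->
  Nv e x :&: Nv e q \subset Nv e u -> Nv e x :&: Nv e q' \subset Nv e u.
Proof.
move=> /and3P [qq' qN2 q'N2] q_a q'_a /subsetP sees_u.
apply/subsetP => y; rewrite !inE => /andP [xy q'y]; apply: contraT => nuy; exfalso.
have yv1 : y != v1 by rewrite eq_sym (nonadj_neq (w := u)) // e_sym.
have [vj [xvj avj vj1 vjy]] := other_nbr y.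
have [v1q | nv1q] := boolP (e v1 q).
  apply: (no_cycle_0122121 xy xv1 xvj q'N2 qN2 aN2) => //; try by rewrite e_sym.
  - by rewrite eq_sym.
  - by rewrite eq_sym.
have [w0 xw0 w0q] := N2_link qN2.
have uw0 : e u w0 by have := sees_u w0; rewrite !inE xw0 e_sym w0q; apply.
apply: (no_cycle_0122121 xy xw0 xv1 q'N2 qN2 uN2) => //; try by rewrite e_sym.
- by rewrite eq_sym (nonadj_neq uw0).
- by apply: (nonadj_neq (w := q)); rewrite e_sym.
- by apply: (nonadj_neq (w := y)); rewrite e_sym.
- by rewrite eq_sym (nonadj_neq v1u).
Qed.

Lemma compN2_Astar_of_link : compN2 e x u \in Astar e x.
Proof.
apply: compN2_Astar => // s; rewrite inE => us.
pose sees_only_u q := (q != a) && (Nv e x :&: Nv e q \subset Nv e u).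
have /andP [] // : sees_only_u s.
apply: (connect_forward _ us); last by rewrite /sees_only_u u_a subsetIr.
move=> q q' qq' /andP [q_a sees_u].
have q'_a := step_avoids_a qq' q_a sees_u.
by rewrite /sees_only_u q'_a (step_preserves_nbr_sub qq').
Qed.

End Link.

End CycleFree.

End Graph.

Theorem lemma2p10 (T : finType) (e : rel T) :
  simple_graph e -> C6C7_free e ->
  forall (x : T) (A : {set T}) (a : T),
    A \in comps e x -> A \notin Astar e x ->
    a \in A -> [exists b in A, e a b] ->
    2 < #|Nv e a :&: Dset e x| ->
    NS e (Nv e a :&: Dset e x) :&: N2 e x = [set a].
Proof.
move=> [e_sym e_irr] [no_C6 no_C7] x A a A_comp A_Astar aA _ three_in_D.
(* The unused hypothesis holds anyway: the vertex c below is a neighbour of a in A. *)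
set V := Nv e a :&: Dset e x.
have V_nbr v : v \in V -> [/\ e x v, e a v & v \notin NS e (VAstar e x)].
  by rewrite in_setI in_setD !in_Nv => /and3P [av vD xv].
have aN2 : a \in N2 e x := subsetP (comps_sub A_comp) a aA.
have three_nbrs : 2 < #|Nv e x :&: Nv e a|.
  apply: (leq_trans three_in_D); apply/subset_leq_card/subsetP => v /V_nbr [xv av _].
  by rewrite !inE xv av.
have [c [w [cN2 ac xw wc naw]]] :=
  link_of_notin_Astar e_sym e_irr no_C6 no_C7 A_comp A_Astar aA (ltnW three_nbrs).
have only_a u v : u \in N2 e x -> v \in V -> e v u -> u = a.
  move=> uN2 /V_nbr [xv av vD] vu; apply/eqP; apply: contraNT vD => u_a.
  apply: (NS_VAstar e_sym xv vu uN2).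
  exact: (compN2_Astar_of_link e_sym e_irr no_C6 no_C7 aN2 cN2 ac xw wc naw xv av
           three_nbrs uN2 u_a vu).
apply/setP => z; rewrite in_setI in_set1.
have [-> | z_a] := eqVneq z a.
  have /card_gt0P [v vV] : 0 < #|V| by apply: leq_ltn_trans three_in_D.
  rewrite aN2 andbT inE; apply/andP; split.
    by apply/negP => /V_nbr [xa _ _]; move: (N2_nadj aN2); rewrite xa.
  by apply/existsP; exists v; have [_ av _] := V_nbr v vV; rewrite vV e_sym.
apply/negbTE/andP => [[]]; rewrite inE => /andP [_ /existsP [v /andP [vV vz]] zN2].
by move/eqP: z_a; apply; apply: only_a zN2 vV vz.
Qed.
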